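(* Let $\mathcal{A}$ be an Ershov $\mathcal{C}$-algebra. Then $\mathcal{A}$ is equationally Noetherian if and only if the subalgebra $\mathcal{C}$ is finite.
   Context: An Ershov algebra is a structure $\langle A; \vee, \wedge, \setminus, 0\rangle$ such that $\langle A;\vee,\wedge\rangle$ is a distributive lattice with least element $0$, and $b \setminus a$ is the relative complement: the unique $z$ with $z \wedge a = 0$ and $z \vee a = a \vee b$. An Ershov $\mathcal{C}$-algebra is an Ershov algebra $\mathcal{A}$ together with a distinguished subalgebra $\mathcal{C}$ whose elements are added as constant symbols; $\mathcal{L}$ is the language $\{\vee,\wedge,\setminus,0\}$ plus these constants. An equation in variables $\bar{x}=(x_1,\dots,x_n)$ is $t(\bar x)=s(\bar x)$ with $t,s$ terms of $\mathcal{L}$; a system of equations is any (possibly infinite) set of such equations, and its solution set is the set of tuples in $A^n$ satisfying all of them. $\mathcal{A}$ is equationally Noetherian if for every $n$ every system of equations in $n$ variables is equivalent over $\mathcal{A}$ (has the same solution set) to some finite subsystem of it. *)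

From Stdlib Require List.
From mathcomp Require Import all_boot.
Set Implicit Arguments. Unset Strict Implicit. Unset Printing Implicit Defensive.

(* An Ershov algebra <A; join, meet, diff, zero>: a distributive lattice
   with least element zero, and diff b a the relative complement
   (z /\ a = 0 and z \/ a = a \/ b). *)
Record ershov_algebra (A : Type) := ErshovAlgebra {
  ejoin : A -> A -> A;
  emeet : A -> A -> A;
  ediff : A -> A -> A;
  ezero : A;
  ejoinA : forall x y z, ejoin x (ejoin y z) = ejoin (ejoin x y) z;
  ejoinC : forall x y, ejoin x y = ejoin y x;
  emeetA : forall x y z, emeet x (emeet y z) = emeet (emeet x y) z;
  emeetC : forall x y, emeet x y = emeet y x;
  ejoinKI : forall x y, ejoin x (emeet x y) = x;
  emeetKU : forall x y, emeet x (ejoin x y) = x;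
  emeetUr : forall x y z, emeet x (ejoin y z) = ejoin (emeet x y) (emeet x z);
  ejoin0x : forall x, ejoin ezero x = x;
  ediff_meet : forall a b, emeet (ediff b a) a = ezero;
  ediff_join : forall a b, ejoin (ediff b a) a = ejoin a b
}.

Definition subalgebra A (E : ershov_algebra A) (C : A -> Prop) : Prop :=
  [/\ C (ezero E),
      (forall x y, C x -> C y -> C (ejoin E x y)),
      (forall x y, C x -> C y -> C (emeet E x y)) &
      (forall x y, C x -> C y -> C (ediff E x y))].

Inductive term A (C : A -> Prop) (n : nat) : Type :=
  | Tvar : 'I_n -> term C n
  | Tconst : {c : A | C c} -> term C n
  | Tzero : term C n
  | Tjoin : term C n -> term C n -> term C n
  | Tmeet : term C n -> term C n -> term C n
  | Tdiff : term C n -> term C n -> term C n.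

Fixpoint teval A (E : ershov_algebra A) (C : A -> Prop) n
    (v : 'I_n -> A) (t : term C n) : A :=
  match t with
  | Tvar i => v i
  | Tconst c => proj1_sig c
  | Tzero => ezero E
  | Tjoin t1 t2 => ejoin E (teval E v t1) (teval E v t2)
  | Tmeet t1 t2 => emeet E (teval E v t1) (teval E v t2)
  | Tdiff t1 t2 => ediff E (teval E v t1) (teval E v t2)
  end.

Definition equation A (C : A -> Prop) n := (term C n * term C n)%type.
Definition system A (C : A -> Prop) n := equation C n -> Prop.

Definition satisfies A (E : ershov_algebra A) (C : A -> Prop) n
    (v : 'I_n -> A) (e : equation C n) : Prop :=
  teval E v e.1 = teval E v e.2.

Definition equationally_noetherian A (E : ershov_algebra A) (C : A -> Prop)
  : Prop :=
  forall (n : nat) (S : system C n),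
    exists l : list (equation C n),
      (forall e, List.In e l -> S e) /\
      (forall v : 'I_n -> A,
         (forall e, S e -> satisfies E v e) <->
         (forall e, List.In e l -> satisfies E v e)).

Definition finite_set A (C : A -> Prop) : Prop :=
  exists l : list A, forall x, C x -> List.In x l.

From mathcomp Require Import all_boot.
From Stdlib Require Import Classical ClassicalEpsilon.
Set Implicit Arguments. Unset Strict Implicit. Unset Printing Implicit Defensive.

(* If C is finite, take as generators the values of the n variables and the
   elements of C, and let w be their join.  Every term then evaluates to the
   join of the "minterms" /\_i (g_i or w \ g_i) selected by the Boolean
   function obtained by reading the term in {0,1}; as there are only finitely
   many Boolean functions of n + |C| arguments, a system contains only
   finitely many equations up to equivalence.
   Conversely, equational Noetherianity in one variable forbids strictly
   descending chains in C (through the system {x <= c_k}), so below every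
   nonzero element of C there is an atom of C, and it bounds all atoms of C
   by one finite join g of atoms (through the system {x >= a}).  Hence
   c \ g = 0 for every c in C, i.e. C lies below g, and the elements of C
   below g are joins of some of the finitely many atoms composing g. *)

Lemma In_nth T (x0 : T) s k : k < size s -> List.In (nth x0 s k) s.
Proof. by elim: s k => [|x s IHs] [|k] //= lt_k; [left | right; apply: IHs]. Qed.

Lemma In_nthP T (x0 : T) x s : List.In x s -> exists k, k < size s /\ nth x0 s k = x.
Proof.
elim: s => [|y s IHs] //= [->|xs]; first by exists 0.
by have [k [lt_k <-]] := IHs xs; exists k.+1.
Qed.

Section ErshovLattice.
Variables (A : Type) (E : ershov_algebra A).
Local Notation J := (ejoin E).
Local Notation M := (emeet E).
Local Notation D := (ediff E).
Local Notation Z := (ezero E).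

Definition ele x y := M x y = x.

Lemma ejoinxx x : J x x = x.
Proof. by rewrite -{2}(emeetKU E x x) ejoinKI. Qed.

Lemma emeetxx x : M x x = x.
Proof. by rewrite -{2}(ejoinKI E x x) emeetKU. Qed.

Lemma ejoinx0 x : J x Z = x.
Proof. by rewrite ejoinC ejoin0x. Qed.

Lemma emeet0x x : M Z x = Z.
Proof. by rewrite -{1}(ejoin0x E x) emeetKU. Qed.

Lemma emeetx0 x : M x Z = Z.
Proof. by rewrite emeetC emeet0x. Qed.

Lemma emeetUl x y z : M (J y z) x = J (M y x) (M z x).
Proof. by rewrite emeetC emeetUr (emeetC E x y) (emeetC E x z). Qed.

Lemma ejoinACA a b c d : J (J a b) (J c d) = J (J a c) (J b d).
Proof. by rewrite -!ejoinA (ejoinA E b c d) (ejoinC E b c) -ejoinA. Qed.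

Lemma emeetACA a b c d : M (M a b) (M c d) = M (M a c) (M b d).
Proof. by rewrite -!emeetA (emeetA E b c d) (emeetC E b c) -emeetA. Qed.

Lemma ele_joinE x y : ele x y -> J x y = y.
Proof. by rewrite /ele => <-; rewrite ejoinC emeetC ejoinKI. Qed.

Lemma ele_refl x : ele x x.
Proof. exact: emeetxx. Qed.

Lemma ele_trans x y z : ele x y -> ele y z -> ele x z.
Proof. by rewrite /ele => hxy hyz; rewrite -hxy -emeetA hyz. Qed.

Lemma ele_anti x y : ele x y -> ele y x -> x = y.
Proof. by rewrite /ele => hxy hyx; rewrite -hxy emeetC hyx. Qed.

Lemma ele_meetr x y : ele (M x y) y.
Proof. by rewrite /ele -emeetA emeetxx. Qed.

Lemma ele_meet x y z : ele z x -> ele z y -> ele z (M x y).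
Proof. by rewrite /ele => hzx hzy; rewrite emeetA hzx hzy. Qed.

Lemma ele_joinl x y : ele x (J x y).
Proof. exact: emeetKU. Qed.

Lemma ele_joinr x y : ele y (J x y).
Proof. by rewrite ejoinC; apply: ele_joinl. Qed.

Lemma ele_diff b a : ele (D b a) b.
Proof.
rewrite /ele; symmetry.
by rewrite -{1}(emeetKU E (D b a) a) ediff_join emeetUr ediff_meet ejoin0x.
Qed.

Lemma ediff_unique z a b : M z a = Z -> J z a = J a b -> z = D b a.
Proof.
move=> za0 zaJ.
have -> : z = M z (D b a).
  by rewrite -{1}(emeetKU E z a) zaJ -(ediff_join E) emeetUr za0 ejoinx0.
have {2}-> : D b a = M (D b a) z.
  by rewrite -{1}(emeetKU E (D b a) a) ediff_join -zaJ emeetUr ediff_meet ejoinx0.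
by rewrite emeetC.
Qed.

Lemma ele_foldr_join x s : List.In x s -> ele x (foldr J Z s).
Proof.
elim: s => [|y s IHs] //= [->|xs]; first exact: ele_joinl.
exact: ele_trans (IHs xs) (ele_joinr _ _).
Qed.

Lemma ele_chain (s : nat -> A) k m :
  (forall i, ele (s i.+1) (s i)) -> k <= m -> ele (s m) (s k).
Proof.
move=> sdec /subnK <-; elim: (m - k) => [|i IHi]; first exact: ele_refl.
exact: ele_trans (sdec _) IHi.
Qed.

End ErshovLattice.

Section BooleanInterpretation.
Variables (A : Type) (E : ershov_algebra A) (w : A).
Local Notation J := (ejoin E).
Local Notation M := (emeet E).
Local Notation D := (ediff E).
Local Notation Z := (ezero E).

(* [binterp gs P] is the join of the minterms /\_i (gs_i if b_i else w \ gs_i)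
   over the bit vectors b with [P b], computed one generator at a time. *)
Fixpoint binterp (gs : seq A) (P : seq bool -> bool) : A :=
  match gs with
  | [::] => if P [::] then w else Z
  | g :: gs' => J (M g (binterp gs' (fun bs => P (true :: bs))))
                  (M (D w g) (binterp gs' (fun bs => P (false :: bs))))
  end.

Lemma eq_binterp gs P Q :
  (forall bs, size bs = size gs -> P bs = Q bs) -> binterp gs P = binterp gs Q.
Proof.
elim: gs P Q => [|g gs IHgs] P Q ePQ /=; first by rewrite ePQ.
congr (J (M g _) (M (D w g) _)); apply: IHgs => bs sz_bs; apply: ePQ.
  by rewrite /= sz_bs.
by rewrite /= sz_bs.
Qed.

Lemma binterp_false gs : binterp gs (fun _ => false) = Z.
Proof. by elim: gs => [|g gs IHgs] //=; rewrite IHgs !emeetx0 ejoinx0. Qed.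

Lemma binterp_or gs P Q :
  binterp gs (fun bs => P bs || Q bs) = J (binterp gs P) (binterp gs Q).
Proof.
elim: gs P Q => [|g gs IHgs] P Q /=.
  by case: (P [::]); case: (Q [::]); rewrite ?ejoinxx ?ejoinx0 ?ejoin0x.
by rewrite (IHgs (fun bs => P (true :: bs))) (IHgs (fun bs => P (false :: bs)))
  ejoinACA -!emeetUr.
Qed.

Lemma binterp_and gs P Q :
  binterp gs (fun bs => P bs && Q bs) = M (binterp gs P) (binterp gs Q).
Proof.
elim: gs P Q => [|g gs IHgs] P Q /=.
  by case: (P [::]); case: (Q [::]); rewrite ?emeetxx ?emeetx0 ?emeet0x.
rewrite (IHgs (fun bs => P (true :: bs))) (IHgs (fun bs => P (false :: bs))).
set X1 := binterp gs _; set Y1 := binterp gs _.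
set X2 := binterp gs _; set Y2 := binterp gs _.
have gdisj : M g (D w g) = Z by rewrite emeetC ediff_meet.
rewrite emeetUr !emeetUl (emeetACA E g X1 g Y1) (emeetACA E (D w g) X2 g Y1).
rewrite (emeetACA E g X1 (D w g) Y2) (emeetACA E (D w g) X2 (D w g) Y2) !emeetxx.
by rewrite gdisj (emeetC E (D w g) g) gdisj !emeet0x ejoinx0 ejoin0x.
Qed.

Lemma binterp_andN gs P Q :
  binterp gs (fun bs => P bs && ~~ Q bs) = D (binterp gs P) (binterp gs Q).
Proof.
apply: ediff_unique.
  rewrite -binterp_and -(binterp_false gs); apply: eq_binterp => bs _.
  by case: (P bs); case: (Q bs).
rewrite -!binterp_or; apply: eq_binterp => bs _.
by case: (P bs); case: (Q bs).
Qed.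

Lemma binterp_true gs :
  (forall g, List.In g gs -> ele E g w) -> binterp gs (fun _ => true) = w.
Proof.
elim: gs => [|g gs IHgs] //= gs_le.
rewrite IHgs => [|x xgs]; last by apply: gs_le; right.
have g_le : ele E g w by apply: gs_le; left.
rewrite g_le (ele_diff E w g) ejoinC ediff_join.
exact: ele_joinE.
Qed.

Lemma binterp_nth gs j :
  (forall g, List.In g gs -> ele E g w) -> j < size gs ->
  binterp gs (fun bs => nth false bs j) = nth Z gs j.
Proof.
elim: gs j => [|g gs IHgs] //= j gs_le lt_j.
have gs'_le : forall x, List.In x gs -> ele E x w by move=> x xgs; apply: gs_le; right.
have g_le : ele E g w by apply: gs_le; left.
case: j lt_j => [|j] lt_j /=.
  by rewrite binterp_true // binterp_false emeetx0 ejoinx0.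
rewrite IHgs // -emeetUl ejoinC ediff_join (ele_joinE g_le) emeetC.
by apply: gs'_le; apply: In_nth.
Qed.

End BooleanInterpretation.

Lemma finite_representatives (X : Type) (K : finType) (key : X -> K) (S : X -> Prop) :
  exists2 L : list X, (forall x, List.In x L -> S x) &
    forall x, S x -> exists2 y, List.In y L & key y = key x.
Proof.
suff [L LS Lrep] : exists2 L : list X, (forall x, List.In x L -> S x) &
    forall x, S x -> key x \in enum K -> exists2 y, List.In y L & key y = key x.
  by exists L => // x Sx; apply: Lrep; rewrite ?mem_enum.
elim: (enum K) => [|k ks [L LS Lrep]]; first by exists nil.
have [[x0 [Sx0 <-]] | no_k] := classic (exists x, S x /\ key x = k).
  exists (x0 :: L) => [x /= [<-|xL] | x Sx]; [by [] | exact: LS |].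
  rewrite in_cons => /orP [/eqP ->|xks]; first by exists x0; [left|].
  by have [y yL eyx] := Lrep x Sx xks; exists y; [right|].
exists L => // x Sx; rewrite in_cons => /orP [/eqP kx|]; last exact: Lrep.
by case: no_k; exists x.
Qed.

Section FiniteConstants.
Variables (A : Type) (E : ershov_algebra A) (C : A -> Prop) (l : list A).
Hypothesis C_in_l : forall x, C x -> List.In x l.
Local Notation J := (ejoin E).
Local Notation Z := (ezero E).

Definition const_index (c : {c | C c}) : nat :=
  proj1_sig (constructive_indefinite_description _
    (In_nthP Z (C_in_l (proj2_sig c)))).

Lemma const_indexP c : const_index c < size l /\ nth Z l (const_index c) = proj1_sig c.
Proof. by rewrite /const_index; case: constructive_indefinite_description => k []. Qed.

Variable n : nat.

(* Bit [i] of a bit vector stands for the variable [i], bit [n + k] for the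
   constant [nth Z l k]. *)
Fixpoint term_bool (t : term C n) : seq bool -> bool :=
  match t with
  | Tvar i => fun bs => nth false bs i
  | Tconst c => fun bs => nth false bs (n + const_index c)
  | Tzero => fun _ => false
  | Tjoin t1 t2 => fun bs => term_bool t1 bs || term_bool t2 bs
  | Tmeet t1 t2 => fun bs => term_bool t1 bs && term_bool t2 bs
  | Tdiff t1 t2 => fun bs => term_bool t1 bs && ~~ term_bool t2 bs
  end.

Definition gens (v : 'I_n -> A) := map v (enum 'I_n) ++ l.

Lemma size_gens v : size (gens v) = n + size l.
Proof. by rewrite /gens size_cat size_map size_enum_ord. Qed.

Lemma teval_binterp v t :
  teval E v t = binterp E (foldr J Z (gens v)) (gens v) (term_bool t).
Proof.
have gens_le g : List.In g (gens v) -> ele E g (foldr J Z (gens v)).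
  exact: ele_foldr_join.
elim: t => [i|c||t1 IH1 t2 IH2|t1 IH1 t2 IH2|t1 IH1 t2 IH2] /=.
- rewrite binterp_nth ?size_gens ?ltn_addr //.
  by rewrite /gens nth_cat size_map size_enum_ord ltn_ord
    (nth_map i) ?size_enum_ord // nth_ord_enum.
- have [lt_c nth_c] := const_indexP c.
  rewrite binterp_nth ?size_gens ?ltn_add2l //.
  by rewrite /gens nth_cat size_map size_enum_ord ltnNge leq_addr /= addKn nth_c.
- by rewrite binterp_false.
- by rewrite IH1 IH2 -binterp_or.
- by rewrite IH1 IH2 -binterp_and.
- by rewrite IH1 IH2 -binterp_andN.
Qed.

Definition truth_table (t : term C n) : {ffun (n + size l).-tuple bool -> bool} :=
  [ffun bs : (n + size l).-tuple bool => term_bool t bs].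

Lemma teval_truth_table t1 t2 v :
  truth_table t1 = truth_table t2 -> teval E v t1 = teval E v t2.
Proof.
move=> /ffunP e12; rewrite !teval_binterp; apply: eq_binterp => bs.
rewrite size_gens => /eqP sz_bs.
by have := e12 (Tuple sz_bs); rewrite !ffunE.
Qed.

Lemma finite_subsystem (S : system C n) :
  exists l' : list (equation C n),
    (forall e, List.In e l' -> S e) /\
    (forall v : 'I_n -> A,
       (forall e, S e -> satisfies E v e) <->
       (forall e, List.In e l' -> satisfies E v e)).
Proof.
have [L LS Lrep] :=
  finite_representatives (fun e : equation C n => (truth_table e.1, truth_table e.2)) S.
exists L; split=> // v; split=> [solS e eL | solL e Se]; first exact/solS/LS.
have [e' e'L [e1 e2]] := Lrep e Se.
by rewrite /satisfies -(teval_truth_table v e1) -(teval_truth_table v e2); apply: solL.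
Qed.

End FiniteConstants.

Lemma equationally_noetherian_of_finite A (E : ershov_algebra A) (C : A -> Prop) :
  finite_set C -> equationally_noetherian E C.
Proof. by case=> l C_in_l n; apply: (finite_subsystem E C_in_l). Qed.

Section NoetherianConstants.
Variables (A : Type) (E : ershov_algebra A) (C : A -> Prop).
Local Notation J := (ejoin E).
Local Notation M := (emeet E).
Local Notation D := (ediff E).
Local Notation Z := (ezero E).
Local Notation x0 := (Tvar C (@ord0 0)).

Definition atom d := [/\ C d, d <> Z & forall z, C z -> ele E z d -> z = Z \/ z = d].

Lemma atomC d : atom d -> C d.
Proof. by case. Qed.

Section OneVariable.
Hypothesis noeth : equationally_noetherian E C.

Lemma noetherian_finite_subfamily (I : Type) (mk : I -> equation C 1) :
  exists F : list I, forall v, (forall i, List.In i F -> satisfies E v (mk i)) ->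
    forall i, satisfies E v (mk i).
Proof.
have [L [LS Lsol]] := noeth (fun e => exists i, e = mk i).
have [F LF] : exists F : list I,
    forall e, List.In e L -> exists2 i, List.In i F & e = mk i.
  elim: L LS {Lsol} => [|e L IHL] LS; first by exists nil.
  have [F LF] := IHL (fun e' e'L => LS e' (or_intror e'L)).
  have [i ->] := LS e (or_introl erefl).
  exists (i :: F) => e' /= [<-|e'L]; first by exists i; [left|].
  by have [j jF ->] := LF e' e'L; exists j; [right|].
exists F => v solF i.
have solL : forall e, List.In e L -> satisfies E v e.
  by move=> e /LF [j jF ->]; apply: solF.
by apply: (proj2 (Lsol v) solL); exists i.
Qed.

(* The system {x <= s_k} in one variable is equivalent to a finite part
   {x <= s_k : k <= m}, which s_m satisfies; hence s_m <= s_(m+1). *)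
Lemma noetherian_dcc (s : nat -> A) (Cs : forall k, C (s k)) :
  (forall k, ele E (s k.+1) (s k)) -> exists m, s m.+1 = s m.
Proof.
move=> sdec.
pose mk k : equation C 1 := (Tmeet x0 (Tconst 1 (exist _ (s k) (Cs k))), x0).
have [F Fsol] := noetherian_finite_subfamily mk.
have F_le_max k : List.In k F -> k <= foldr maxn 0 F.
  elim: F {Fsol} => [|j F IHF] //= [<-|kF]; first exact: leq_maxl.
  exact: leq_trans (IHF kF) (leq_maxr _ _).
set m := foldr maxn 0 F in F_le_max.
exists m; apply: ele_anti; first exact: sdec.
apply: (Fsol (fun _ => s m)) => k kF.
exact: ele_chain (F_le_max k kF).
Qed.

Lemma noetherian_join_bound (T : A -> Prop) : (forall x, T x -> C x) ->
  exists2 F : list A, (forall x, List.In x F -> T x) &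
    forall x, T x -> ele E x (foldr J Z F).
Proof.
move=> TC.
pose mk (x : {x | T x}) : equation C 1 :=
  let c := Tconst 1 (exist _ (proj1_sig x) (TC _ (proj2_sig x))) in (Tmeet x0 c, c).
have [F Fsol] := noetherian_finite_subfamily mk.
set g := foldr J Z (map (@proj1_sig _ _) F).
exists (map (@proj1_sig _ _) F) => [x /List.in_map_iff [[y Ty] [<- _]] // | x Tx].
rewrite /ele emeetC; apply: (Fsol (fun _ => g) _ (exist _ x Tx)) => y yF.
rewrite /satisfies /= emeetC; apply: ele_foldr_join.
by apply/List.in_map_iff; exists y.
Qed.

Lemma exists_atom_below e : C e -> e <> Z -> exists2 d, atom d & ele E d e.
Proof.
move=> Ce e_neq0; apply: NNPP => no_atom.
pose good d := C d /\ d <> Z /\ ele E d e.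
have smaller d : good d -> exists d', good d' /\ ele E d' d /\ d' <> d.
  case=> Cd [d_neq0 de]; apply: NNPP => no_smaller; apply: no_atom; exists d => //.
  split=> // z Cz zd; apply: NNPP => /not_or_and [z_neq0 z_neq_d].
  by apply: no_smaller; exists z; do !split=> //; apply: ele_trans zd de.
pose next d := epsilon (inhabits e) (fun d' => good d' /\ ele E d' d /\ d' <> d).
pose s k := iter k next e.
have good_s k : good (s k).
  elim: k => [|k IHk]; first by do !split=> //; apply: ele_refl.
  exact: (epsilon_spec _ _ (smaller _ IHk)).1.
have next_s k : ele E (s k.+1) (s k) /\ s k.+1 <> s k.
  exact: (epsilon_spec _ _ (smaller _ (good_s k))).2.
have [m] := noetherian_dcc (fun k => (good_s k).1) (fun k => (next_s k).1).
exact: (next_s m).2.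
Qed.

End OneVariable.

Definition finite_below d := exists L : list A, forall z, C z -> ele E z d -> List.In z L.

Lemma atom_finite_below d : atom d -> finite_below d.
Proof.
case=> _ _ d_atom; exists [:: Z; d] => z Cz /(d_atom z Cz) [->|->].
  by left.
by right; left.
Qed.

Section Subalgebra.
Hypothesis C_sub : subalgebra E C.

Lemma subalgebra_foldr_join s : (forall x, List.In x s -> C x) -> C (foldr J Z s).
Proof.
case: C_sub => C0 CJ _ _.
elim: s => [|y s IHs] //= Cs; apply: CJ; first by apply: Cs; left.
by apply: IHs => x xs; apply: Cs; right.
Qed.

(* Distributivity: z <= a \/ b gives z = (z /\ a) \/ (z /\ b). *)
Lemma finite_below_join a b : C a -> C b ->
  finite_below a -> finite_below b -> finite_below (J a b).
Proof.
case: C_sub => _ _ CM _ Ca Cb [La La_below] [Lb Lb_below].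
exists (List.flat_map (fun x => List.map (J x) Lb) La) => z Cz zab.
apply/List.in_flat_map; exists (M z a); split.
  by apply: La_below; [apply: CM | apply: ele_meetr].
apply/List.in_map_iff; exists (M z b); split; first by rewrite -emeetUr.
by apply: Lb_below; [apply: CM | apply: ele_meetr].
Qed.

Lemma finite_below_foldr_join s : (forall x, List.In x s -> C x /\ finite_below x) ->
  finite_below (foldr J Z s).
Proof.
elim: s => [|y s IHs] /= Cs.
  by exists [:: Z] => z _ z0; left; rewrite -z0 emeetx0.
have [Cy y_fin] := Cs y (or_introl erefl).
apply: finite_below_join => //; last by apply: IHs => x xs; apply: Cs; right.
by apply: subalgebra_foldr_join => x xs; have [] := Cs x (or_intror xs).
Qed.

Lemma finite_of_equationally_noetherian : equationally_noetherian E C -> finite_set C.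
Proof.
move=> noeth; case: (C_sub) => _ _ _ CD.
have [F F_atoms atoms_le] := noetherian_join_bound noeth atomC.
set g := foldr J Z F.
have Cg : C g by apply: subalgebra_foldr_join => x /F_atoms /atomC.
have C_le_g c : C c -> ele E c g.
  move=> Cc; apply: NNPP => c_not_le.
  have cg_neq0 : D c g <> Z.
    move=> cg0; apply: c_not_le.
    have := ediff_join E g c; rewrite cg0 ejoin0x => ->.
    by rewrite /ele ejoinC emeetKU.
  have [d d_atom d_le] := exists_atom_below noeth (CD _ _ Cc Cg) cg_neq0.
  case: (d_atom) => _ d_neq0 _; apply: d_neq0.
  have : ele E d (M (D c g) g) by apply: ele_meet => //; apply: atoms_le.
  by rewrite ediff_meet /ele emeetx0 => <-.
have [L L_below] : finite_below g.
  apply: finite_below_foldr_join => x /F_atoms x_atom.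
  by split; [apply: atomC | apply: atom_finite_below].
by exists L => x Cx; apply: L_below => //; apply: C_le_g.
Qed.

End Subalgebra.
End NoetherianConstants.

Theorem mainTheorem4 (A : Type) (E : ershov_algebra A) (C : A -> Prop) :
  subalgebra E C ->
  (equationally_noetherian E C <-> finite_set C).
Proof.
move=> C_sub; split; first exact: finite_of_equationally_noetherian.
exact: equationally_noetherian_of_finite.
Qed.
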